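(* Let $\lambda\in\Lambda(n,r)$, $1\le i\le n-1$, and let $\mathbf i=[i_1,\dots,i_r]$ be a word with letters in $\{1,\dots,n\}$. Then, viewing elements of $\mathbf S_0(n,r)$ as endomorphisms of $V_0^{\otimes r}$, $$e_{i,\lambda}(\bar\xi_{\mathbf i})=\begin{cases}\sum_{\mathbf j\in E_i(\mathbf i)}\bar\xi_{\mathbf j}&\text{if }\mathrm{cont}(\mathbf i)=\lambda,\\0&\text{otherwise},\end{cases}\qquad f_{i,\lambda}(\bar\xi_{\mathbf i})=\begin{cases}\sum_{\mathbf j\in F_i(\mathbf i)}\bar\xi_{\mathbf j}&\text{if }\mathrm{cont}(\mathbf i)=\lambda,\\0&\text{otherwise}.\end{cases}$$
   Context: $\mathbf H_r(0)$ is the $0$-Hecke algebra over $\mathbb C$, generated by $\bar\pi_1,\dots,\bar\pi_{r-1}$ with $\bar\pi_i^2=-\bar\pi_i$, the braid relations, and $\bar\pi_i\bar\pi_j=\bar\pi_j\bar\pi_i$ for $|i-j|\ge2$. $\bar\pi_w$ is defined via any reduced word of $w\in\mathfrak S_r$. $V_0=\mathbb C^n$ has basis $\bar\xi_1,\dots,\bar\xi_n$; $\bar\xi_{\mathbf i}=\bar\xi_{i_1}\otimes\dots\otimes\bar\xi_{i_r}$; $\mathrm{cont}(\mathbf i)\in\Lambda(n,r)$ records the number of occurrences of each letter. The right action on $V_0^{\otimes r}$: for $\mathbf v=\bar\xi_{k_1}\otimes\dots\otimes\bar\xi_{k_r}$, $\mathbf v\bar\pi_i$ is $\mathbf v$ with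 factors $i,i+1$ swapped if $k_i<k_{i+1}$, is $0$ if $k_i=k_{i+1}$, and is $-\mathbf v$ if $k_i>k_{i+1}$. For $\lambda\in\Lambda(n,r)$: $\mathfrak S_\lambda$ is the Young subgroup, $\bar x_\lambda=\sum_{w\in\mathfrak S_\lambda}\bar\pi_w$, and $\mathbf i_\lambda=[1^{\lambda_1},\dots,n^{\lambda_n}]$. $\phi_0:\bigoplus_\lambda\bar x_\lambda\mathbf H_r(0)\to V_0^{\otimes r}$, $\bar x_\lambda h\mapsto\bar\xi_{\mathbf i_\lambda}h$, is a right module isomorphism. $\mathbf S_0(n,r)$ (complex $0$-Schur algebra) has Jensen–Su basis $\{e_A\}_{A\in M_n(r)}$ and is identified with $\mathrm{End}_{\mathbf H_r(0)}(V_0^{\otimes r})$ through $\phi_0$ as follows. With $R_i^\lambda=\{x:\lambda_1+\dots+\lambda_{i-1}<x\le\lambda_1+\dots+\lambda_i\}$, $\lambda=\mathrm{ro}(A)$, $\mu=\mathrm{co}(A)$, choose $w_A$ with $a_{i,j}=|R_i^\lambda\cap w_AR_j^\mu|$, and let $d_A$ be the shortest element in $\mathfrak S_\lambda w_A\mathfrak S_\mu$. Then $e_A$ acts on $\bigoplus_\nu\bar x_\nu\mathbf H_r(0)$ by $\bar x_\nu h\mapsto\delta_{\mu,\nu}\big(\sum_{x\in\mathfrak S_\lambda d_A\mathfrak S_\mu}\bar\pi_x\big)h$. Define $e_{i,\lambda}=e_{D_\lambda-E_{i+1,i+1}+E_{i,i+1}}$ and $f_{i,\lambda}=e_{D_\lambda-E_{i,i}+E_{i+1,i}}$,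 where $D_\lambda=\mathrm{diag}(\lambda)$ and $E_{a,b}$ are matrix units. $E_i(\mathbf i)$ is the set of words $\mathbf j=[j_1,\dots,j_r]$ such that there is exactly one position $k$ with $i_k=i+1$ and $j_k=i$, $i_\ell\ne i$ for all $\ell>k$, and $j_m=i_m$ for $m\ne k$. $F_i(\mathbf i)$ is the set of words $\mathbf j$ such that there is exactly one position $k$ with $i_k=i$ and $j_k=i+1$, $i_\ell\ne i+1$ for all $\ell<k$, and $j_m=i_m$ for $m\ne k$. *)

(* Letters 1..n are encoded as 'I_n (0-based), positions
   1..r as 'I_r (0-based). *)
From mathcomp Require Import all_boot all_order all_algebra all_fingroup.
From mathcomp Require Import complex Rstruct.



Unset Printing Implicit Defensive.

Import GRing.Theory.
Local Open Scope ring_scope.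

Definition CC : fieldType := (Rdefinitions.R)[i].

Definition word (n r : nat) := {ffun 'I_r -> 'I_n}.

(* V_0^{(x) r}: vectors are coordinate functions on the basis xi_j *)
Definition tens (n r : nat) := {ffun word n r -> CC}.

Definition xi {n r : nat} (j : word n r) : tens n r := [ffun k => (k == j)%:R].

Definition cont {n r : nat} (j : word n r) : {ffun 'I_n -> nat} :=
  [ffun a => #|[set p : 'I_r | j p == a]|].

Definition block {n : nat} (r : nat) (lam : {ffun 'I_n -> nat}) (a : 'I_n)
  : {set 'I_r} :=
  [set p : 'I_r | (\sum_(b < n | (b < a)%N) lam b <= p)%N
                  && (p < \sum_(b < n | (b <= a)%N) lam b)%N].

(* \bar\xi_{i_lambda}, i_lambda = [1^{lambda_1},...,n^{lambda_n}]: the word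
   whose letter at position p is the a with p in R_a^lambda *)
Definition xi_lam {n r : nat} (lam : {ffun 'I_n -> nat}) : tens n r :=
  [ffun k : word n r => ([forall p, p \in block r lam (k p)] : bool)%:R].

Definition swapw {n r : nat} (p q : 'I_r) (j : word n r) : word n r :=
  [ffun k => j (tperm p q k)].

(* right action of the generator \bar\pi on V_0^{(x) r}, where p, q = p+1 are
   the two positions it acts on *)
Definition gen_act {n r : nat} (p q : 'I_r) (v : tens n r) : tens n r :=
  \sum_(j : word n r) v j *:
    (if (val (j p) < val (j q))%N then xi (swapw p q j)
     else if j p == j q then 0 else - xi j).

(* right action of \bar\pi_w, w in S_r (permutations are functions on
   positions, composed as functions), via a reduced word:
   v \bar\pi_w = (v \bar\pi_{w s}) \bar\pi_s for a right descent s of w. *)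
Fixpoint pact_fuel {n r : nat} (f : nat) (w : {perm 'I_r}) (v : tens n r)
  : tens n r :=
  match f with
  | 0 => v
  | f'.+1 =>
    match [pick pq : 'I_r * 'I_r | (val pq.2 == (val pq.1).+1)
                                   && (val (w pq.2) < val (w pq.1))%N] with
    | None => v
    | Some pq => gen_act pq.1 pq.2 (pact_fuel f' (tperm pq.1 pq.2 * w)%g v)
    end
  end.

Definition pact {n r : nat} (w : {perm 'I_r}) (v : tens n r) : tens n r :=
  pact_fuel (r * r) w v.

Definition young {n : nat} (r : nat) (lam : {ffun 'I_n -> nat})
  : {set {perm 'I_r}} :=
  [set w : {perm 'I_r} |
     [forall a, forall p, (p \in block r lam a) ==> (w p \in block r lam a)]].

Definition ro {n : nat} (A : 'M[nat]_n) : {ffun 'I_n -> nat} :=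
  [ffun a => (\sum_(b < n) A a b)%N].
Definition co {n : nat} (A : 'M[nat]_n) : {ffun 'I_n -> nat} :=
  [ffun b => (\sum_(a < n) A a b)%N].

Definition is_wA {n : nat} (r : nat) (A : 'M[nat]_n) (w : {perm 'I_r}) : bool :=
  [forall a, forall b,
     A a b == #|block r (ro A) a :&: (w @: block r (co A) b)|].

(* the double coset S_lambda w_A S_mu (= S_lambda d_A S_mu) *)
Definition dcoset {n : nat} (r : nat) (A : 'M[nat]_n) : {set {perm 'I_r}} :=
  match [pick w | is_wA r A w] with
  | Some w => [set x : {perm 'I_r} |
                 [exists a in young r (ro A), exists b in young r (co A),
                    x == (b * w * a)%g]]   (* as functions: x = a o w o b *)
  | None => set0
  end.

(* e_A on a basis vector xi_j, transported through phi_0: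
   if cont j = mu = co A then xi_j = phi_0(x_mu pi_d) for some d, and
   e_A(x_mu pi_d) = (sum_{x in S_lambda d_A S_mu} pi_x) pi_d, whose image
   under phi_0 is xi_{i_lambda} (sum_x pi_x) pi_d;
   otherwise (x_nu h with nu <> mu) the image is 0. *)
Definition eA_basis {n r : nat} (A : 'M[nat]_n) (j : word n r) : tens n r :=
  if cont j == co A then
    match [pick d : {perm 'I_r} | pact d (xi_lam (co A)) == xi j] with
    | Some d => pact d (\sum_(x in dcoset r A) pact x (xi_lam (ro A)))
    | None => 0
    end
  else 0.

Definition eA {n r : nat} (A : 'M[nat]_n) (v : tens n r) : tens n r :=
  \sum_(j : word n r) v j *: eA_basis A j.

(* D_lambda - E_{i+1,i+1} + E_{i,i+1}  (here ip = i+1) *)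
Definition Emx {n : nat} (lam : {ffun 'I_n -> nat}) (i ip : 'I_n) : 'M[nat]_n :=
  \matrix_(a, b) (if a == b then (if a == ip then (lam a).-1 else lam a)
                  else if (a == i) && (b == ip) then 1 else 0)%N.
(* D_lambda - E_{i,i} + E_{i+1,i} *)
Definition Fmx {n : nat} (lam : {ffun 'I_n -> nat}) (i ip : 'I_n) : 'M[nat]_n :=
  \matrix_(a, b) (if a == b then (if a == i then (lam a).-1 else lam a)
                  else if (a == ip) && (b == i) then 1 else 0)%N.

(* e_{i,lambda}, f_{i,lambda}; they are 0 when the matrix would have a
   negative entry (lambda_{i+1} = 0, resp. lambda_i = 0). *)
Definition e_il {n r : nat} (lam : {ffun 'I_n -> nat}) (i ip : 'I_n)
  (v : tens n r) : tens n r :=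
  if (0 < lam ip)%N then eA (Emx lam i ip) v else 0.
Definition f_il {n r : nat} (lam : {ffun 'I_n -> nat}) (i ip : 'I_n)
  (v : tens n r) : tens n r :=
  if (0 < lam i)%N then eA (Fmx lam i ip) v else 0.

Definition Eset {n r : nat} (i ip : 'I_n) (w : word n r) : {set word n r} :=
  [set j : word n r | [exists k : 'I_r,
     [&& w k == ip, j k == i,
         [forall l : 'I_r, (k < l)%N ==> (w l != i)] &
         [forall m : 'I_r, (m != k) ==> (j m == w m)]]]].

Definition Fset {n r : nat} (i ip : 'I_n) (w : word n r) : {set word n r} :=
  [set j : word n r | [exists k : 'I_r,
     [&& w k == i, j k == ip,
         [forall l : 'I_r, (l < k)%N ==> (w l != ip)] &
         [forall m : 'I_r, (m != k) ==> (j m == w m)]]]].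

(* Standardize [w]: [xi w] is [xi u] acted on by a permutation [d] that keeps
   equal letters in order, where [u] is the sorted word of content [lam].  By
   induction along descents, acting on [xi u] ([u] sorted) by [x] gives
   [xi (u o x)] if [x] keeps the equal letters of [u] in order, and [0]
   otherwise.  Hence for [A = D_lam - E_ee + E_ce] the sum over the double coset
   of [w_A] becomes the sum of [xi v] over the words [v] obtained from [u] by
   turning one letter [e] into [c].  Acting on [xi v] by [d], the new letter [c]
   behaves like the [e] it replaced, since no letter lies strictly between [c]
   and [e]; the only new phenomenon is that it may have to cross another letter
   [c], which kills the term.  This happens exactly when a letter [c] of [w]
   lies after it if [c < e], or before it if [c > e]: the condition defining
   [E_i] and [F_i]. *)

From mathcomp Require Import all_boot all_order all_algebra all_fingroup.
From mathcomp Require Import complex Rstruct zify.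

Unset Printing Implicit Defensive.

Import GRing.Theory.
Local Open Scope ring_scope.

Section Tensors.
Variables n r : nat.
Implicit Types (j k : word n r) (v : tens n r) (p q : 'I_r) (w : {perm 'I_r}).

Lemma xiE j k : xi j k = (k == j)%:R.
Proof. by rewrite ffunE. Qed.

Lemma xi_neq0 j : xi j != 0.
Proof.
apply/eqP => /(congr1 (fun v : tens n r => v j)).
by rewrite xiE ffunE eqxx mulr1n => /eqP; rewrite oner_eq0.
Qed.

Lemma xi_inj : injective (@xi n r).
Proof.
move=> j j' /(congr1 (fun v : tens n r => v j)); rewrite !xiE eqxx.
by case: eqP => // _ /eqP; rewrite mulr1n mulr0n oner_eq0.
Qed.

Lemma gen_act_xi p q j :
  gen_act p q (xi j) =
  if (val (j p) < val (j q))%N then xi (swapw p q j)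
  else if j p == j q then 0 else - xi j.
Proof.
rewrite /gen_act (bigD1 j) //= big1 => [|k /negbTE kj]; last first.
  by rewrite xiE kj scale0r.
by rewrite xiE eqxx scale1r addr0.
Qed.

Lemma gen_actD p q : {morph @gen_act n r p q : x y / x + y}.
Proof.
by move=> x y; rewrite -big_split; apply: eq_bigr => j _; rewrite ffunE scalerDl.
Qed.

Lemma gen_act0 p q : gen_act p q (0 : tens n r) = 0.
Proof. by rewrite /gen_act big1 // => j _; rewrite ffunE scale0r. Qed.

Lemma pactD w : {morph @pact n r w : x y / x + y}.
Proof.
move=> x y; rewrite /pact; elim: (r * r)%N w => [//|f IH] w /=.
by case: pickP => [pq _|//]; rewrite IH gen_actD.
Qed.

Lemma pact0 w : pact w (0 : tens n r) = 0.
Proof.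
rewrite /pact; elim: (r * r)%N w => [//|f IH] w /=.
by case: pickP => [pq _|//]; rewrite IH gen_act0.
Qed.

Lemma pact_sum w (I : finType) (P : pred I) (F : I -> tens n r) :
  pact w (\sum_(x | P x) F x) = \sum_(x | P x) pact w (F x).
Proof. exact: (big_morph _ (pactD w) (pact0 w)). Qed.

Lemma eA_xi (A : 'M[nat]_n) j : eA A (xi j) = eA_basis A j.
Proof.
rewrite /eA (bigD1 j) //= xiE eqxx scale1r big1 ?addr0 // => k /negbTE kj.
by rewrite xiE kj scale0r.
Qed.

End Tensors.

Arguments xi_neq0 {n r} j.

Section AdjacentTranspositions.
Variable r : nat.
Implicit Types (p q a b : 'I_r) (w : {perm 'I_r}).

Lemma tperm_val p q a :
  val (tperm p q a) = if a == p then val q else if a == q then val p else val a.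
Proof.
case: tpermP => [->|->|/eqP/negbTE-> /eqP/negbTE->]; rewrite ?eqxx //.
by case: eqP => [->|].
Qed.

Lemma tperm_ltE p q a b : val q = (val p).+1 ->
  ~~ ((a == p) && (b == q)) -> ~~ ((a == q) && (b == p)) ->
  (tperm p q a < tperm p q b)%N = (a < b)%N.
Proof.
rewrite !tperm_val -!(inj_eq val_inj) /= => Hq.
case: (nat_of_ord a =P p); case: (nat_of_ord a =P q);
case: (nat_of_ord b =P p); case: (nat_of_ord b =P q) => /= *; apply/idP/idP; lia.
Qed.

Lemma tperm_lt p q a b : val q = (val p).+1 -> (a < b)%N ->
  ~~ ((a == p) && (b == q)) -> (tperm p q a < tperm p q b)%N.
Proof.
move=> /= Hq ab not_pq; rewrite tperm_ltE //.
by apply/negP => /andP [/eqP ea /eqP eb]; move: ab Hq; rewrite ea eb; lia.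
Qed.

Arguments tperm_lt {p q a b}.

Definition inversions w :=
  [set ab : 'I_r * 'I_r | (ab.1 < ab.2)%N && (w ab.2 < w ab.1)%N].

Lemma card_inversions_le w : (#|inversions w| <= r * r)%N.
Proof. by rewrite (leq_trans (max_card _)) // card_prod card_ord. Qed.

Lemma card_inversions_descent w p q : val q = (val p).+1 -> (w q < w p)%N ->
  (#|inversions (tperm p q * w)| < #|inversions w|)%N.
Proof.
move=> Hq Hd.
pose f (ab : 'I_r * 'I_r) := (tperm p q ab.1, tperm p q ab.2).
have f_inj : injective f by move=> [a b] [a' b'] [] /perm_inj -> /perm_inj ->.
have pq_inv : (p, q) \in inversions w by rewrite inE /= Hq ltnSn Hd.
rewrite -(card_imset _ f_inj) (cardsD1 (p, q) (inversions w)) pq_inv add1n ltnS.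
apply/subset_leq_card/subsetP => _ /imsetP [[a b] + ->].
rewrite !inE /= !permM => /andP [ab Hw].
have not_pq : ~~ ((a == p) && (b == q)).
  apply/negP => /andP [/eqP ea /eqP eb].
  by move: Hw Hd; rewrite ea eb tpermL tpermR; lia.
rewrite Hw (tperm_lt Hq ab not_pq) !andbT /f /=.
apply/eqP => -[ea eb].
move: ab Hq; rewrite -(tpermK p q a) -(tpermK p q b) ea eb tpermL tpermR /=; lia.
Qed.

Lemma perm_increasing_on_id (y : {perm 'I_r}) (L : pred 'I_r) :
  (forall z, L z -> L (y z)) ->
  (forall z z', L z -> L z' -> (z < z')%N -> (y z < y z')%N) ->
  forall z, L z -> y z = z.
Proof.
move=> yL y_incr z Lz.
have Lit m : L (iter m y z) by elim: m => //= m IH; apply: yL.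
have yz_order : iter #[y]%g y z = z by rewrite -permX expg_order perm1.
have o_gt0 := order_gt0 y.
case: (ltngtP (y z) z) => yz; last exact: val_inj.
- have: forall m, (iter m.+1 y z < z)%N.
    by elim=> [//|m IH]; rewrite iterS (ltn_trans _ yz) // y_incr.
  by move/(_ #[y]%g.-1); rewrite prednK // yz_order ltnn.
- have: forall m, (z < iter m.+1 y z)%N.
    by elim=> [//|m IH]; rewrite iterS (ltn_trans yz) // y_incr.
  by move/(_ #[y]%g.-1); rewrite prednK // yz_order ltnn.
Qed.

Lemma increasing_perm_id w : (forall a b, (a < b)%N -> (w a < w b)%N) -> w = 1%g.
Proof.
move=> w_incr; apply/permP => z; rewrite perm1.
by apply: (@perm_increasing_on_id w predT) => // a b _ _; apply: w_incr.
Qed.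

Lemma inversions0_id w : inversions w = set0 -> w = 1%g.
Proof.
move=> inv0; apply: increasing_perm_id => a b ab.
rewrite ltn_neqAle leqNgt; apply/andP; split.
  by apply/negP => /eqP/val_inj/perm_inj E; move: ab; rewrite E ltnn.
by apply/negP => ba; have := in_set0 (a, b); rewrite -inv0 inE /= ab ba.
Qed.

Lemma no_descent_id w :
  (forall p q, val q = (val p).+1 -> (w p <= w q)%N) -> w = 1%g.
Proof.
move=> no_desc; apply: increasing_perm_id => a.
suff: forall k b, val b = (a + k.+1)%N -> (w a < w b)%N.
  by move=> Hk b ab; apply: (Hk (b - a.+1)%N) => /=; lia.
have step p q : val q = (val p).+1 -> (w p < w q)%N.
  move=> Hq; rewrite ltn_neqAle no_desc // andbT.
  by apply/negP => /eqP/val_inj/perm_inj E; move: Hq; rewrite E; lia.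
elim=> [|k IH] b /= Hb; first by apply: step => /=; lia.
have b1 : (b.-1 < r)%N by have := ltn_ord b; lia.
by rewrite (ltn_trans (IH (Ordinal b1) _)) ?step //=; lia.
Qed.

End AdjacentTranspositions.

Arguments tperm_ltE {r p q a b}.
Arguments tperm_lt {r p q a b}.
Arguments inversions {r} w.
Arguments inversions0_id {r w}.
Arguments no_descent_id {r w}.
Arguments card_inversions_descent {r w p q}.

Section DescentRecursion.
Variables n r : nat.

(* [pact] runs on fuel [r * r]; the number of inversions, which drops at each
   descent step, shows that it never runs out. *)
Lemma pact_by_descents (P : {perm 'I_r} -> Prop)
    (Phi : {perm 'I_r} -> tens n r) (v : tens n r) :
  Phi 1%g = v ->
  (forall w (p q : 'I_r), P w -> val q = (val p).+1 -> (w q < w p)%N ->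
     P (tperm p q * w)%g /\ Phi w = gen_act p q (Phi (tperm p q * w)%g)) ->
  forall w, P w -> pact w v = Phi w.
Proof.
move=> Phi1 Phi_step w Pw.
suff: forall (f : nat) w, P w -> (#|inversions w| <= f)%N -> pact_fuel f w v = Phi w.
  by apply=> //; apply: card_inversions_le.
elim=> [|f IH] {}w {}Pw inv_le /=.
  by move: inv_le; rewrite leqn0 cards_eq0 => /eqP/inversions0_id ->.
case: pickP => [[p q] /= /andP [/eqP Hq Hd]|no_desc].
  have [Pw' ->] := Phi_step w p q Pw Hq Hd.
  by rewrite IH // -ltnS (leq_trans (card_inversions_descent Hq Hd)).
suff -> : w = 1%g by [].
apply: no_descent_id => p q Hq.
by have := no_desc (p, q); rewrite /= Hq eqxx /= => /negbT; rewrite -leqNgt.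
Qed.

End DescentRecursion.

Lemma forall_perm {T : finType} (s : {perm T}) (P : pred T) :
  [forall x, P x] = [forall x, P (s x)].
Proof. by apply/forallP/forallP => H x //; rewrite -(permKV s x). Qed.

Definition wcomp {n r} (u : word n r) (w : {perm 'I_r}) : word n r :=
  [ffun a => u (w a)].

Definition setw {n r} (u : word n r) (k : 'I_r) (c : 'I_n) : word n r :=
  [ffun p => if p == k then c else u p].

Definition wsorted {n r} (u : word n r) :=
  forall a b : 'I_r, (a <= b)%N -> (u a <= u b)%N.

Definition stable {n r} (u : word n r) (w : {perm 'I_r}) :=
  [forall a : 'I_r, forall b : 'I_r,
     ((a < b)%N && (w b < w a)%N) ==> (u (w a) != u (w b))].

Definition wrong_side {n r} (e c : 'I_n) (t b : 'I_r) :=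
  ((t < b)%N && (c < e)%N) || ((b < t)%N && (e < c)%N).

(* The changed letter [c] of [wcomp (setw u k c) w] sits at position
   [w^-1 k]. *)
Definition unblocked {n r} (u : word n r) (k : 'I_r) (c : 'I_n)
    (w : {perm 'I_r}) :=
  [forall b, (u (w b) == c) ==> ~~ wrong_side (u k) c ((w^-1)%g k) b].

Section Rearrangements.
Variables n r : nat.
Implicit Types (u : word n r) (w : {perm 'I_r}) (a b p q k : 'I_r) (c : 'I_n).

Lemma wcomp1 u : wcomp u 1 = u.
Proof. by apply/ffunP => a; rewrite ffunE perm1. Qed.

Lemma swapw_wcomp u w p q : swapw p q (wcomp u (tperm p q * w)%g) = wcomp u w.
Proof. by apply/ffunP => a; rewrite !ffunE permM tpermK. Qed.

Lemma wcomp_injl w : injective (wcomp^~ w : word n r -> word n r).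
Proof.
move=> u u' /ffunP uu'; apply/ffunP => a.
by have := uu' ((w^-1)%g a); rewrite !ffunE permKV.
Qed.

Lemma setw_inj u c : {in [pred k | u k != c] &, injective (setw u ^~ c)}.
Proof.
move=> k k' uk _ /ffunP/(_ k); rewrite !ffunE eqxx.
by case: eqP => // _ ck; rewrite inE ck eqxx in uk.
Qed.

Lemma stableP u w :
  reflect (forall a b, (a < b)%N -> (w b < w a)%N -> u (w a) != u (w b))
          (stable u w).
Proof.
apply: (iffP forallP) => H.
  by move=> a b ab ba; have /forallP/(_ b)/implyP := H a; apply; rewrite ab ba.
by move=> a; apply/forallP => b; apply/implyP => /andP [ab ba]; apply: H.
Qed.

Lemma stable_descent u w p q : val q = (val p).+1 -> (w q < w p)%N ->
  stable u w = stable u (tperm p q * w)%g && (u (w q) != u (w p)).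
Proof.
move=> Hq Hd; apply/idP/idP.
  move/stableP => S; apply/andP; split; last by rewrite eq_sym S //= Hq.
  apply/stableP => a b ab; rewrite !permM => Hw.
  have not_pq : ~~ ((a == p) && (b == q)).
    apply/negP => /andP [/eqP ea /eqP eb].
    by move: Hw Hd; rewrite ea eb tpermL tpermR; lia.
  by apply: S => //; apply: tperm_lt.
case/andP => /stableP S u_pq; apply/stableP => a b ab Hw.
have [/andP [/eqP -> /eqP ->]|not_pq] := boolP ((a == p) && (b == q)).
  by rewrite eq_sym.
by have := S _ _ (tperm_lt Hq ab not_pq); rewrite !permM !tpermK; apply.
Qed.

Arguments stable_descent u {w p q}.

Lemma stable_descent_lt u w p q : wsorted u -> stable u w ->
  val q = (val p).+1 -> (w q < w p)%N -> (u (w q) < u (w p))%N.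
Proof.
move=> u_sorted Sw Hq Hd; rewrite ltn_neqAle u_sorted ?andbT; last exact: ltnW.
by move: Sw; rewrite (stable_descent u Hq Hd) => /andP [_]; rewrite (inj_eq val_inj).
Qed.

Arguments stable_descent_lt {u w p q}.

Lemma pact_sorted u w : wsorted u ->
  pact w (xi u) = if stable u w then xi (wcomp u w) else 0.
Proof.
move=> u_sorted.
apply: (@pact_by_descents n r (fun _ => True)
  (fun w => if stable u w then xi (wcomp u w) else 0)) => //.
  have -> : stable u 1 by apply/stableP => a b ab; rewrite !perm1; lia.
  by rewrite wcomp1.
move=> {}w p q _ Hq Hd; split => //.
rewrite (stable_descent u Hq Hd).
case: (stable u _) => /=; last by rewrite gen_act0.
rewrite gen_act_xi !ffunE !permM tpermL tpermR.
case: (ltngtP (u (w q)) (u (w p))) => [lt|lt|/val_inj eq_qp].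
- by rewrite -(inj_eq val_inj) (ltn_eqF lt) swapw_wcomp.
- by have := u_sorted _ _ (ltnW Hd); rewrite leqNgt lt.
- by rewrite eq_qp eqxx.
Qed.

Lemma unblocked_false u k c w b : u (w b) = c ->
  wrong_side (u k) c ((w^-1)%g k) b -> unblocked u k c w = false.
Proof. by move=> ub side; apply/forallP => /(_ b); rewrite ub eqxx side. Qed.

Arguments unblocked_false {u k c w b}.

Lemma unblocked_tperm u k c w p q : val q = (val p).+1 ->
  (forall b, u (w b) = c -> ~~ (((w^-1)%g k == p) && (b == q)) &&
                            ~~ (((w^-1)%g k == q) && (b == p))) ->
  unblocked u k c (tperm p q * w)%g = unblocked u k c w.
Proof.
move=> Hq not_pair; rewrite /unblocked (forall_perm (tperm p q)).
apply: eq_forallb => b; rewrite permM tpermK invMg permM tpermV.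
case: eqP => //= /not_pair /andP [not_pq not_qp].
rewrite /wrong_side (tperm_ltE Hq not_pq not_qp) (tperm_ltE Hq) //.
  by rewrite andbC.
by rewrite andbC.
Qed.

Lemma unblocked1 u k c : wsorted u ->
  (forall z, (u k < u z)%N -> (c <= u z)%N) ->
  (forall z, (u z < u k)%N -> (u z <= c)%N) ->
  unblocked u k c 1.
Proof.
move=> u_sorted c_above c_below; apply/forallP => b; apply/implyP.
rewrite invg1 !perm1 /wrong_side => /eqP ub.
apply/negP => /orP [/andP [kb ck]|/andP [bk kc]].
  by have := u_sorted _ _ (ltnW kb); rewrite ub; lia.
by have := u_sorted _ _ (ltnW bk); rewrite ub; lia.
Qed.

Section OneLetterChanged.
Variables (u : word n r) (k : 'I_r) (c : 'I_n).
Hypothesis u_sorted : wsorted u.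
Hypothesis c_above : forall z, (u k < u z)%N -> (c <= u z)%N.
Hypothesis c_below : forall z, (u z < u k)%N -> (u z <= c)%N.

Lemma setw_descent_cases w p q : stable u w ->
  val q = (val p).+1 -> (w q < w p)%N ->
  (setw u k c (w q) = setw u k c (w p) /\ unblocked u k c w = false) \/
  ((setw u k c (w q) < setw u k c (w p))%N /\
   unblocked u k c (tperm p q * w)%g = unblocked u k c w).
Proof.
move=> Sw Hq Hd; have lt_qp := stable_descent_lt u_sorted Sw Hq Hd.
have pq : (p < q)%N by rewrite Hq.
have pNq : p != q by apply/eqP => pq_eq; move: Hq; rewrite pq_eq; lia.
have qNp : q != p by rewrite eq_sym.
rewrite !ffunE !(canF_eq (permK w)); set t := (w^-1)%g k.
have wt : w t = k by rewrite permKV.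
have [tq|tNq] := eqVneq q t; [|have [tp|tNp] := eqVneq p t].
- rewrite -tq (negbTE pNq).
  have uk : u k = u (w q) by rewrite -wt -tq.
  have : (c <= u (w p))%N by apply: c_above; rewrite uk.
  rewrite leq_eqVlt => /orP [/eqP/val_inj c_wp|c_lt].
    left; split=> //; apply: (unblocked_false (esym c_wp)).
    by rewrite /wrong_side -/t -tq uk pq c_wp lt_qp orbT.
  right; split=> //; apply: unblocked_tperm => // b ub.
  rewrite -/t -tq (negbTE qNp) eqxx /=.
  by apply: contraTN c_lt => /eqP bp; rewrite -bp ub ltnn.
- have uk : u k = u (w p) by rewrite -wt -tp.
  have : (u (w q) <= c)%N by apply: c_below; rewrite uk.
  rewrite leq_eqVlt => /orP [/eqP/val_inj wq_c|lt_c].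
    left; split=> //; apply: (unblocked_false wq_c).
    by rewrite /wrong_side -/t -tp uk pq -wq_c lt_qp.
  right; split=> //; apply: unblocked_tperm => // b ub.
  rewrite -/t -tp eqxx (negbTE pNq) andbT /=.
  by apply: contraTN lt_c => /eqP bq; rewrite -bq ub ltnn.
- right; split=> //.
  apply: unblocked_tperm => // b _.
  by rewrite -/t !(eq_sym t) (negbTE tNp) (negbTE tNq).
Qed.

Arguments setw_descent_cases {w p q}.

Lemma pact_setw w : stable u w ->
  pact w (xi (setw u k c)) =
  if unblocked u k c w then xi (wcomp (setw u k c) w) else 0.
Proof.
apply: (@pact_by_descents n r (stable u)
  (fun w => if unblocked u k c w then xi (wcomp (setw u k c) w) else 0)).
  by rewrite unblocked1 // wcomp1.
move=> {}w p q Sw Hq Hd.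
split; first by move: Sw; rewrite (stable_descent u Hq Hd) => /andP [].
have xpE : wcomp (setw u k c) (tperm p q * w)%g p = setw u k c (w q).
  by rewrite ffunE permM tpermL.
have xqE : wcomp (setw u k c) (tperm p q * w)%g q = setw u k c (w p).
  by rewrite ffunE permM tpermR.
have [[x_eq ->]|[x_lt ->]] := setw_descent_cases Sw Hq Hd;
  case: (unblocked _ _ _ _); rewrite ?gen_act0 // gen_act_xi xpE xqE.
  by rewrite x_eq eqxx ltnn.
by rewrite x_lt swapw_wcomp.
Qed.

End OneLetterChanged.
End Rearrangements.

Arguments pact_sorted {n r u} w.
Arguments pact_setw {n r u k c} u_sorted c_above c_below {w}.

Definition block_start {n} (lam : {ffun 'I_n -> nat}) (a : 'I_n) : nat :=
  (\sum_(b < n | (b < a)%N) lam b)%N.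

Definition is_ilam {n r} (lam : {ffun 'I_n -> nat}) (s : word n r) :=
  forall p, p \in block r lam (s p).

Section Blocks.
Variables n r : nat.
Implicit Types (u v s : word n r) (x : {perm 'I_r}) (lam : {ffun 'I_n -> nat}).
Implicit Types (p q : 'I_r) (a b : 'I_n).

Lemma block_end lam a :
  (\sum_(b < n | (b <= a)%N) lam b)%N = (block_start lam a + lam a)%N.
Proof.
rewrite (bigD1 a) //= addnC; congr (_ + _)%N.
by apply: eq_bigl => b; rewrite -(inj_eq val_inj) /=; case: ltngtP.
Qed.

Lemma blockE lam a p :
  (p \in block r lam a) = (block_start lam a <= p < block_start lam a + lam a)%N.
Proof. by rewrite inE block_end. Qed.

Lemma block_end_le_start lam a b : (a < b)%N ->
  (block_start lam a + lam a <= block_start lam b)%N.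
Proof.
move=> ab; rewrite -block_end /block_start.
rewrite [X in (X <= _)%N]big_mkcond [X in (_ <= X)%N]big_mkcond.
by apply: leq_sum => x _; case: ifP; case: ifP => //= *; lia.
Qed.

Arguments block_end_le_start lam {a b}.

Lemma block_end_le_sum lam a :
  (block_start lam a + lam a <= \sum_(b < n) lam b)%N.
Proof.
rewrite -block_end [X in (_ <= X)%N](bigID (fun b : 'I_n => (b <= a)%N)) /=.
exact: leq_addr.
Qed.

Lemma block_uniq lam p a b :
  p \in block r lam a -> p \in block r lam b -> a = b.
Proof.
rewrite !blockE => Ha Hb; apply: val_inj.
by case: (ltngtP a b) => // ab; have := block_end_le_start lam ab; lia.
Qed.

Arguments block_uniq {lam p a b}.

Lemma sum_cont v : (\sum_(a < n) cont v a)%N = r.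
Proof.
rewrite -[in RHS](card_ord r) -sum1_card (partition_big v predT) //=.
by apply: eq_bigr => a _; rewrite ffunE -sum1_card; apply: eq_bigl => p; rewrite inE.
Qed.

Lemma cont_wcomp u x : cont (wcomp u x) = cont u.
Proof.
apply/ffunP => a; rewrite !ffunE -[in RHS](card_preimset _ (@perm_inj _ x)).
by apply: eq_card => p; rewrite !inE ffunE.
Qed.

Lemma standard_perm_exists v : exists x : {perm 'I_r},
  (forall q, x q \in block r (cont v) (v q)) /\
  (forall q q', (q < q')%N -> v q = v q' -> (x q < x q')%N).
Proof.
pose before q := [set q' : 'I_r | (q' < q)%N && (v q' == v q)].
pose pos q := (block_start (cont v) (v q) + #|before q|)%N.
have before_lt q : (#|before q| < cont v (v q))%N.
  rewrite ffunE (cardsD1 q [set p | v p == v q]) inE eqxx add1n ltnS.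
  apply/subset_leq_card/subsetP => z; rewrite !inE => /andP [zq ->].
  by rewrite andbT; apply: contraTneq zq => ->; rewrite ltnn.
have pos_lt q : (pos q < r)%N.
  have := block_end_le_sum (cont v) (v q); rewrite sum_cont.
  by have := before_lt q; rewrite /pos; lia.
have before_mono q q' : (q < q')%N -> v q = v q' -> (#|before q| < #|before q'|)%N.
  move=> qq' vqq'; rewrite (cardsD1 q (before q')) !inE qq' vqq' eqxx add1n ltnS.
  apply/subset_leq_card/subsetP => z; rewrite !inE => /andP [zq /eqP ->].
  rewrite vqq' eqxx !andbT (ltn_trans zq qq') andbT.
  by apply: contraTneq zq => ->; rewrite ltnn.
pose f q : 'I_r := Ordinal (pos_lt q).
have f_block q : f q \in block r (cont v) (v q).
  by rewrite blockE /= /pos; have := before_lt q; lia.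
have f_incr q q' : (q < q')%N -> v q = v q' -> (f q < f q')%N.
  by move=> qq' vqq'; rewrite /= /pos vqq'; have := before_mono q q' qq' vqq'; lia.
have f_inj : injective f.
  move=> q q' fqq'.
  have vqq' : v q = v q' by apply: (block_uniq (f_block q)); rewrite fqq'.
  case: (ltngtP q q') => [qq'|qq'|]; last exact: val_inj.
    by have := f_incr q q' qq' vqq'; rewrite fqq' ltnn.
  by have := f_incr q' q qq' (esym vqq'); rewrite fqq' ltnn.
by exists (perm f_inj); split=> [q|q q' qq' vqq']; rewrite !permE; auto.
Qed.

Lemma is_ilam_sorted lam s : is_ilam lam s -> wsorted s.
Proof.
move=> s_ilam p p' pp'; rewrite leqNgt; apply/negP => lt.
have := block_end_le_start lam lt.
by have := s_ilam p; have := s_ilam p'; rewrite !blockE; lia.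
Qed.

Lemma standardization v : exists (x : {perm 'I_r}) (s : word n r),
  [/\ is_ilam (cont v) s, v = wcomp s x & stable s x].
Proof.
have [x [x_block x_incr]] := standard_perm_exists v.
pose s : word n r := [ffun p => v ((x^-1)%g p)].
exists x, s; split.
- by move=> p; rewrite ffunE -{1}(permKV x p).
- by apply/ffunP => q; rewrite !ffunE permK.
- apply/stableP => a b ab ba; rewrite !ffunE !permK.
  by apply: contraTneq ba => /(x_incr _ _ ab) xab; rewrite -leqNgt ltnW.
Qed.

Lemma is_ilam_block lam s a : is_ilam lam s -> block r lam a = [set p | s p == a].
Proof.
move=> s_ilam; apply/setP => p; rewrite [in RHS]inE.
by apply/idP/eqP => [/(block_uniq (s_ilam p))|<-].
Qed.

Arguments is_ilam_block {lam s} a.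

Lemma is_ilam_uniq lam s s' : is_ilam lam s -> is_ilam lam s' -> s = s'.
Proof. by move=> Hs Hs'; apply/ffunP => p; apply: block_uniq (Hs p) (Hs' p). Qed.

Lemma xi_lamE lam s : is_ilam lam s -> xi_lam lam = xi s.
Proof.
move=> s_ilam; apply/ffunP => k; rewrite !ffunE; congr ((nat_of_bool _)%:R).
apply/forallP/eqP => [H|->//]; apply/ffunP => p.
exact: block_uniq (H p) (s_ilam p).
Qed.

Lemma youngE lam s x : is_ilam lam s ->
  (x \in young r lam) = [forall p, s (x p) == s p].
Proof.
move=> s_ilam; rewrite inE; apply/forallP/forallP => H.
  move=> p; apply/eqP/(block_uniq (s_ilam (x p))).
  by have /forallP/(_ p)/implyP := H (s p); apply.
move=> a; apply/forallP => p; rewrite !(is_ilam_block a s_ilam) !inE.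
by apply/implyP => /eqP <-; apply: H.
Qed.

Lemma stable_wcomp_inj s x x' :
  stable s x -> stable s x' -> wcomp s x = wcomp s x' -> x = x'.
Proof.
move=> /stableP S /stableP S' E.
have sE z : s (x z) = s (x' z).
  by have := congr1 (fun f : word n r => f z) E; rewrite !ffunE.
pose y := (x * x'^-1)%g.
have x'y z : x' (y z) = x z by rewrite permM permKV.
have x_incr (z z' : 'I_r) : (z < z')%N -> s (x z) = s (x z') -> (x z < x z')%N.
  move=> zz' sE'; case: (ltngtP (x z) (x z')) => // [xz|/val_inj/perm_inj xz].
    by move: (S z z' zz' xz); rewrite sE' eqxx.
  by rewrite xz ltnn in zz'.
(* [y] preserves every letter class of [s] and is increasing on it. *)
apply/permP => q; rewrite -x'y; congr (x' _).
apply: (@perm_increasing_on_id r y [pred z | s (x z) == s (x q)]) => //= z.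
  by move=> /eqP <-; rewrite sE x'y.
move=> z' /eqP sz /eqP sz' zz'.
have xzz' : (x z < x z')%N by apply: x_incr => //; rewrite sz sz'.
case: (ltngtP (y z) (y z')) => // [yz|/val_inj/perm_inj yz].
  by have := S' _ _ yz; rewrite !x'y => /(_ xzz'); rewrite sz sz' eqxx.
by rewrite yz ltnn in zz'.
Qed.

End Blocks.

Arguments block_uniq {n r lam p a b}.
Arguments is_ilam_block {n r lam s} a.
Arguments is_ilam_uniq {n r lam s s'}.
Arguments xi_lamE {n r lam s}.
Arguments is_ilam_sorted {n r lam s}.
Arguments standardization {n r} v.
Arguments youngE {n r lam s} x.
Arguments stable_wcomp_inj {n r s x x'}.

Section StepMatrix.
Variables n r : nat.
Implicit Types (u v : word n r) (x : {perm 'I_r}) (lam : {ffun 'I_n -> nat}).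
Implicit Types (k q : 'I_r) (a b c e : 'I_n).

Lemma co_Emx lam c e : c != e -> (0 < lam e)%N -> co (Emx lam c e) = lam.
Proof.
move=> ce le; apply/ffunP => b; rewrite ffunE (bigD1 b) //= mxE eqxx.
have [->|be] := eqVneq b e.
  rewrite (bigD1 c) //= mxE (negbTE ce) !eqxx /= big1 ?addn0 ?addn1 ?prednK //.
  by move=> a /andP [ae ac]; rewrite mxE (negbTE ae) (negbTE ac).
by rewrite big1 ?addn0 // => a ab; rewrite mxE (negbTE ab) (negbTE be) andbF.
Qed.

Lemma cont_pairs u v a :
  cont v a = (\sum_b #|[set q | (u q == b) && (v q == a)]|)%N.
Proof.
rewrite ffunE -sum1_card (partition_big u predT) //=.
by apply: eq_bigr => b _; rewrite -sum1_card; apply: eq_bigl => q; rewrite !inE andbC.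
Qed.

Lemma card_setw lam u k c e a b : c != e -> cont u = lam -> u k = e ->
  #|[set q | (u q == b) && (setw u k c q == a)]| = Emx lam c e a b.
Proof.
move=> ce u_cont uk; rewrite mxE.
have card_letter b' : #|[set q | u q == b']| = lam b' by rewrite -u_cont ffunE.
have [<-|ab] := eqVneq a b.
  have [->|ae] := eqVneq a e.
    rewrite -card_letter (cardsD1 k [set q | u q == e]) inE uk eqxx add1n /=.
    apply: eq_card => q; rewrite !inE ffunE.
    by have [->|] := eqVneq q k; rewrite ?uk ?eqxx ?(negbTE ce) ?andbb.
  rewrite -card_letter; apply: eq_card => q; rewrite !inE ffunE.
  by have [->|] := eqVneq q k; rewrite ?andbb // uk eq_sym (negbTE ae).
have -> : [set q | (u q == b) && (setw u k c q == a)] =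
          [set q | (q == k) && ((a == c) && (b == e))].
  apply/setP => q; rewrite !inE ffunE; have [->|qk] := eqVneq q k.
    by rewrite uk andbC eq_sym [b == e]eq_sym.
  by apply/negbTE/negP => /andP [/eqP ub /eqP ua]; move: ab; rewrite -ub -ua eqxx.
case: (_ && _).
  by rewrite -(cards1 k); apply: eq_card => q; rewrite !inE andbT.
by apply/eqP; rewrite cards_eq0; apply/eqP/setP => q; rewrite !inE andbF.
Qed.

Lemma cont_setw lam u k c e : c != e -> cont u = lam -> u k = e ->
  cont (setw u k c) = ro (Emx lam c e).
Proof.
move=> ce u_cont uk; apply/ffunP => a; rewrite (cont_pairs u) ffunE.
by apply: eq_bigr => b _; apply: card_setw.
Qed.

Lemma is_wAE (A : 'M[nat]_n) u u' x :
  is_ilam (ro A) u' -> is_ilam (co A) u ->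
  is_wA r A x =
  [forall a, forall b, A a b == #|[set q | (u q == b) && (u' (x q) == a)]|].
Proof.
move=> u'_ilam u_ilam; apply: eq_forallb => a; apply: eq_forallb => b.
rewrite (is_ilam_block a u'_ilam) (is_ilam_block b u_ilam).
rewrite -[in RHS](card_imset _ (@perm_inj _ x)); congr (_ == _); apply: eq_card => p.
rewrite !inE; apply/andP/imsetP => [[pa /imsetP [q + pE]]|[q]].
  by rewrite inE => qb; exists q; rewrite // inE qb -pE pa.
by rewrite inE => /andP [qb qa] ->; split=> //; apply: imset_f; rewrite inE.
Qed.

Arguments is_wAE {A u u' x}.
Arguments card_setw {lam u k c e} a b.

Lemma is_wA_setw lam u u' k c e x : c != e -> (0 < lam e)%N ->
  is_ilam lam u -> cont u = lam -> u k = e -> is_ilam (ro (Emx lam c e)) u' ->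
  setw u k c = wcomp u' x -> is_wA r (Emx lam c e) x.
Proof.
move=> ce le u_ilam u_cont uk u'_ilam setwE.
rewrite (is_wAE (u := u) u'_ilam) ?co_Emx //; apply/forallP => a; apply/forallP => b.
rewrite -(card_setw a b ce u_cont uk) setwE; apply/eqP/eq_card => q.
by rewrite !inE ffunE.
Qed.

Lemma is_wA_wcomp_setw lam u u' c e x : c != e -> (0 < lam e)%N ->
  is_ilam (ro (Emx lam c e)) u' -> is_ilam lam u ->
  is_wA r (Emx lam c e) x -> exists2 k, u k = e & wcomp u' x = setw u k c.
Proof.
move=> ce le u'_ilam u_ilam.
rewrite (is_wAE (u := u) u'_ilam) ?co_Emx // => /forallP wA.
have Eab a b : Emx lam c e a b = #|[set q | (u q == b) && (u' (x q) == a)]|.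
  by apply/eqP; have /forallP := wA a; apply.
have : #|[set q | (u q == e) && (u' (x q) == c)]| == 1%N.
  by rewrite -Eab mxE (negbTE ce) !eqxx.
case/cards1P => k k_only.
have : k \in [set q | (u q == e) && (u' (x q) == c)] by rewrite k_only set11.
rewrite inE => /andP [/eqP uk /eqP u'xk].
exists k => //; apply/ffunP => q; rewrite !ffunE.
have [->//|qk] := eqVneq q k.
have : (0 < #|[set q' | (u q' == u q) && (u' (x q') == u' (x q))]|)%N.
  by apply/card_gt0P; exists q; rewrite inE !eqxx.
rewrite -Eab mxE; have [//|u'xq] := eqVneq (u' (x q)) (u q).
case: eqP => [u'xq_c|]; case: eqP => [uq_e|] //= _.
have : q \in [set q | (u q == e) && (u' (x q) == c)] by rewrite inE uq_e u'xq_c !eqxx.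
by rewrite k_only inE (negbTE qk).
Qed.

End StepMatrix.

Arguments co_Emx {n lam c e}.
Arguments cont_setw {n r lam u k c e}.
Arguments is_wA_setw {n r lam u u' k c e x}.
Arguments is_wA_wcomp_setw {n r lam u u' c e x}.

Section DoubleCoset.
Variables (n r : nat) (lam : {ffun 'I_n -> nat}) (c e : 'I_n) (u : word n r).
Hypotheses (ce : c != e) (lam_e : (0 < lam e)%N).
Hypotheses (u_ilam : is_ilam lam u) (u_cont : cont u = lam).
Implicit Types (s : word n r) (x : {perm 'I_r}) (k : 'I_r).

Lemma letter_e_exists : exists k, u k = e.
Proof.
have : (0 < cont u e)%N by rewrite u_cont.
by rewrite ffunE => /card_gt0P [k]; rewrite inE => /eqP; exists k.
Qed.

Lemma setw_standard s k : is_ilam (ro (Emx lam c e)) s -> u k = e ->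
  exists2 x, setw u k c = wcomp s x & stable s x.
Proof.
move=> s_ilam uk; have [x [s' [s'_ilam setwE Sx]]] := standardization (setw u k c).
rewrite (cont_setw ce u_cont uk) in s'_ilam.
by exists x; rewrite -(is_ilam_uniq s'_ilam s_ilam).
Qed.

Arguments setw_standard {s k}.

Lemma dcoset_words s : is_ilam (ro (Emx lam c e)) s ->
  [set wcomp s x | x in [set x in dcoset r (Emx lam c e) | stable s x]] =
  [set setw u k c | k in [set k | u k == e]].
Proof.
move=> s_ilam; rewrite /dcoset; case: pickP => [wA wA_ok|no_wA]; last first.
  have [k0 uk0] := letter_e_exists; have [x0 setwE _] := setw_standard s_ilam uk0.
  by have := no_wA x0; rewrite (is_wA_setw ce lam_e u_ilam u_cont uk0 s_ilam setwE).
have [k1 uk1 wAE] := is_wA_wcomp_setw ce lam_e s_ilam u_ilam wA_ok.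
have swA z : s (wA z) = setw u k1 c z.
  by rewrite -wAE ffunE.
have co_ilam : is_ilam (co (Emx lam c e)) u by rewrite co_Emx.
apply/setP => j; apply/imsetP/imsetP => [[x]|[k]].
  rewrite !inE => /andP [/existsP [a /andP [+ /existsP [b]]]].
  rewrite (youngE a s_ilam) (youngE b co_ilam) => /forallP a_young.
  move=> /andP [/forallP b_young /eqP ->] _ ->.
  exists ((b^-1)%g k1); first by rewrite inE -(eqP (b_young _)) permKV uk1.
  apply/ffunP => p; rewrite !ffunE !permM (eqP (a_young _)) swA ffunE.
  by rewrite (eqP (b_young p)) (canF_eq (permK b)).
rewrite inE => /eqP uk ->.
have [xk setwE Sxk] := setw_standard s_ilam uk.
exists xk; rewrite // !inE Sxk andbT.
apply/existsP; exists ((tperm k k1 * wA)^-1 * xk)%g.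
rewrite (youngE _ s_ilam); apply/andP; split.
  apply/forallP => p; rewrite permM.
  set z := ((tperm k k1 * wA)^-1)%g p.
  have pE : p = wA (tperm k k1 z) by rewrite -permM /z permKV.
  have xkz : s (xk z) = setw u k c z by rewrite setwE ffunE.
  rewrite xkz pE swA !ffunE.
  case: tpermP => [->|->|/eqP/negbTE-> /eqP/negbTE->]; rewrite ?eqxx ?uk ?uk1 //.
  by rewrite (eq_sym k1).
apply/existsP; exists (tperm k k1); rewrite (youngE _ co_ilam) mulKVg eqxx andbT.
by apply/forallP => p; case: tpermP => [->|->|//]; rewrite ?uk ?uk1.
Qed.

Arguments dcoset_words {s}.

Lemma dcoset_sum :
  \sum_(x in dcoset r (Emx lam c e)) pact x (xi_lam (ro (Emx lam c e))) =
  \sum_(k | u k == e) xi (setw u k c).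
Proof.
have [k0 uk0] := letter_e_exists.
have [_ [s [s_ilam _ _]]] := standardization (setw u k0 c).
rewrite (cont_setw ce u_cont uk0) in s_ilam.
rewrite (xi_lamE s_ilam).
under eq_bigr => x _ do rewrite (pact_sorted x (is_ilam_sorted s_ilam)).
rewrite -big_mkcondr /= (eq_bigl [in [set x in dcoset r (Emx lam c e) | stable s x]]);
  last by move=> x; rewrite inE.
rewrite -(big_imset _ (h := wcomp s)) /=; last first.
  by move=> x x'; rewrite !inE => /andP [_ Sx] /andP [_ Sx']; apply: stable_wcomp_inj.
rewrite (dcoset_words s_ilam) big_imset /=; last first.
  move=> k k'; rewrite !inE => /eqP uk /eqP uk'.
  by apply: setw_inj; rewrite inE ?uk ?uk' eq_sym.
by apply: eq_bigl => k; rewrite inE.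
Qed.

End DoubleCoset.

Arguments dcoset_sum {n r lam c e u}.

Definition step_set {n r} (c e : 'I_n) (w : word n r) : {set word n r} :=
  [set j : word n r | [exists t : 'I_r,
     [&& w t == e, j t == c,
         [forall l : 'I_r, wrong_side e c t l ==> (w l != c)] &
         [forall m : 'I_r, (m != t) ==> (j m == w m)]]]].

Section StepSet.
Variables n r : nat.
Implicit Types (u w : word n r) (d : {perm 'I_r}) (c e : 'I_n).

Lemma step_set0 c e w : cont w e = 0%N -> step_set c e w = set0.
Proof.
rewrite ffunE => /eqP; rewrite cards_eq0 => /eqP no_e.
apply/setP => j; rewrite !inE; apply/existsP => -[t /and4P [wt _ _ _]].
by have := in_set0 t; rewrite -no_e inE wt.
Qed.

Lemma step_set_wcomp c e u d :
  step_set c e (wcomp u d) =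
  [set wcomp (setw u k c) d | k in [set k | (u k == e) && unblocked u k c d]].
Proof.
apply/setP => j; rewrite inE; apply/existsP/imsetP.
  move=> [t /and4P [/eqP wt /eqP jt /forallP c_side /forallP j_other]].
  have udt : u (d t) = e by rewrite -wt ffunE.
  exists (d t).
    rewrite inE udt eqxx /=; apply/forallP => b; apply/implyP => /eqP ub.
    rewrite permK udt; apply: contraTN (c_side b) => side.
    by rewrite side /= ffunE ub eqxx.
  apply/ffunP => m; rewrite !ffunE (inj_eq (@perm_inj _ d)).
  have [->//|mt] := eqVneq m t.
  by have /implyP/(_ mt)/eqP := j_other m; rewrite ffunE.
move=> [k]; rewrite inE => /andP [/eqP uk /forallP k_ok] ->.
exists ((d^-1)%g k); rewrite !ffunE permKV uk !eqxx /=.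
apply/andP; split.
  apply/forallP => l; apply/implyP => side; rewrite ffunE; apply/eqP => ul.
  by have := k_ok l; rewrite ul eqxx uk side.
apply/forallP => m; apply/implyP => mk.
by rewrite !ffunE (canF_eq (permK d)) (negbTE mk).
Qed.

Lemma Eset_step_set (i ip : 'I_n) w : val ip = (val i).+1 ->
  Eset i ip w = step_set i ip w.
Proof.
move=> ip_succ; have i_lt_ip : (i < ip)%N by rewrite ip_succ.
have ip_lt_i : (ip < i)%N = false by rewrite ltnNge ltnW.
apply: eq_finset => j; apply: eq_existsb => t; rewrite /wrong_side i_lt_ip ip_lt_i.
by congr [&& _, _, _ & _]; apply: eq_forallb => l; rewrite andbT andbF orbF.
Qed.

Lemma Fset_step_set (i ip : 'I_n) w : val ip = (val i).+1 ->
  Fset i ip w = step_set ip i w.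
Proof.
move=> ip_succ; have i_lt_ip : (i < ip)%N by rewrite ip_succ.
have ip_lt_i : (ip < i)%N = false by rewrite ltnNge ltnW.
apply: eq_finset => j; apply: eq_existsb => t; rewrite /wrong_side i_lt_ip ip_lt_i.
by congr [&& _, _, _ & _]; apply: eq_forallb => l; rewrite andbT andbF.
Qed.

End StepSet.

Section StepOperator.
Variables (n r : nat) (lam : {ffun 'I_n -> nat}) (c e : 'I_n).
Hypothesis adjacent : val c = (val e).+1 \/ val e = (val c).+1.

Let ce : c != e.
Proof. by apply/eqP => ce; case: adjacent; rewrite ce; lia. Qed.

Lemma eA_Emx_xi (w : word n r) : (0 < lam e)%N -> cont w = lam ->
  eA (Emx lam c e) (xi w) = \sum_(j in step_set c e w) xi j.
Proof.
move=> lam_e w_cont.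
rewrite eA_xi /eA_basis (co_Emx ce lam_e) w_cont eqxx.
have [d0 [u [u_ilam wE Sd0]]] := standardization w; rewrite w_cont in u_ilam.
have u_cont : cont u = lam by rewrite -w_cont wE cont_wcomp.
have u_sorted := is_ilam_sorted u_ilam.
rewrite (xi_lamE u_ilam); case: pickP => [d|no_d]; last first.
  by have := no_d d0; rewrite pact_sorted // Sd0 -wE eqxx.
rewrite pact_sorted //; case: ifP => [Sd /eqP/xi_inj w_d|_ /eqP/esym]; last first.
  by move/eqP; rewrite (negbTE (xi_neq0 w)).
rewrite (dcoset_sum ce lam_e u_ilam u_cont) pact_sum -w_d step_set_wcomp.
have c_above k z : u k = e -> (u k < u z)%N -> (c <= u z)%N.
  by move=> ->; case: adjacent => /=; lia.
have c_below k z : u k = e -> (u z < u k)%N -> (u z <= c)%N.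
  by move=> ->; case: adjacent => /=; lia.
under eq_bigr => k /eqP uk do
  rewrite (pact_setw u_sorted (c_above k ^~ uk) (c_below k ^~ uk) Sd).
rewrite -big_mkcondr big_imset /=; last first.
  move=> k k'; rewrite !inE => /andP [/eqP uk _] /andP [/eqP uk' _] /wcomp_injl.
  by apply: setw_inj; rewrite inE ?uk ?uk' eq_sym.
by apply: eq_bigl => k; rewrite inE.
Qed.

Lemma e_il_xi (w : word n r) :
  e_il lam c e (xi w) =
  if cont w == lam then \sum_(j in step_set c e w) xi j else 0.
Proof.
rewrite /e_il; have [lam_e0|lam_e] := posnP (lam e).
  by case: eqP => // w_cont; rewrite step_set0 ?big_set0 // w_cont.
case: eqP => [w_cont|w_cont]; first exact: eA_Emx_xi.
by rewrite eA_xi /eA_basis (co_Emx ce lam_e) (introF eqP w_cont).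
Qed.

End StepOperator.

Theorem mainTheorem8 (n r : nat) (lam : {ffun 'I_n -> nat}) (i ip : 'I_n)
  (w : word n r) :
  (\sum_(a < n) lam a)%N = r ->
  val ip = (val i).+1 ->
  e_il lam i ip (xi w)
    = (if cont w == lam then \sum_(j in Eset i ip w) xi j else 0)
  /\
  f_il lam i ip (xi w)
    = (if cont w == lam then \sum_(j in Fset i ip w) xi j else 0).
Proof.
move=> _ ip_succ.
rewrite Eset_step_set // Fset_step_set //.
by split; apply: e_il_xi; [right | left].
Qed.
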